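(* Let $T$ be a complete discrete valuation ring with fraction field $K$ and uniformizer $t$. Let $\widehat R_0$ be a ring containing $T$ which is a complete discrete valuation ring with uniformizer $t$, with fraction field $F_0$; fix a real $\alpha>1$ and equip $F_0$ with the absolute value $|t^n u| = \alpha^{-n}$ ($n \in \mathbb Z$, $u \in \widehat R_0^\times$). Let $F_1, F_2$ be subfields of $F_0$ containing $T$, and let $V \subset F_1 \cap \widehat R_0$ and $W \subset F_2 \cap \widehat R_0$ be $t$-adically complete $T$-submodules such that (I) $V + W = \widehat R_0$ and (II) $V \cap t\widehat R_0 = tV$ and $W \cap t\widehat R_0 = tW$. Equip $V[1/t] \subset F_0$ with the induced metric. Then: (1) $V$ is closed in $\widehat R_0$; (2) for $v \in V[1/t]\setminus\{0\}$, $|v| = \inf\{\alpha^n : n \in \mathbb Z,\ t^n v \in V\}$; (3) $V = \{ v \in V[1/t] : |v| \le 1\}$, and $V$ is an open and closed submodule of $V[1/t]$; (4) $V[1/t]$ is closed in $F_0$ and is a Banach $K$-space.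
   Context: $t$-adically complete means that the natural map $V \to \varprojlim_m V/t^{m+1}V$ is an isomorphism. *)

From HB Require Import structures.
From mathcomp Require Import all_boot all_order all_algebra.
From mathcomp Require Import classical_sets reals.
Set Implicit Arguments. Unset Strict Implicit. Unset Printing Implicit Defensive.
Import Order.TTheory GRing.Theory Num.Theory.
Local Open Scope ring_scope.

(* All rings/modules are modelled as subsets of one ambient field F
   (the fraction field F_0 of \hat R_0). *)
Section Defs.
Variable F : fieldType.

Definition subring (S : set F) : Prop :=
  [/\ S 1, (forall x y, S x -> S y -> S (x - y)) &
      (forall x y, S x -> S y -> S (x * y))].

Definition subfield (S : set F) : Prop :=
  subring S /\ (forall x, S x -> S x^-1).

Definition unit_in (S : set F) (u : F) : Prop := [/\ S u, u != 0 & S u^-1].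

Definition dvr_unif (S : set F) (t : F) : Prop :=
  [/\ subring S, S t, t != 0, ~ S t^-1 &
      (forall x, S x -> x != 0 -> exists n : nat, exists u, unit_in S u /\ x = t ^+ n * u)].

Definition tpowM (t : F) (k : nat) (M : set F) : set F :=
  [set x | exists y, M y /\ x = t ^+ k * y].

(* M (an additive subgroup of F) is t-adically complete: the natural map
   M -> lim_m M / t^(m+1) M is an isomorphism, i.e. injective (separated)
   and surjective (every compatible system of residues lifts). *)
Definition tadic_complete (t : F) (M : set F) : Prop :=
  (forall x, M x -> (forall m : nat, tpowM t m.+1 M x) -> x = 0) /\
  (forall xs : nat -> F, (forall m, M (xs m)) ->
     (forall m, tpowM t m.+1 M (xs m.+1 - xs m)) ->
     exists x, M x /\ forall m, tpowM t m.+1 M (x - xs m)).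

Definition cdvr_unif (S : set F) (t : F) : Prop :=
  dvr_unif S t /\ tadic_complete t S.

Definition frac_of (S : set F) : set F :=
  [set x | exists a b, [/\ S a, S b, b != 0 & x = a / b]].

Definition submodule (T M : set F) : Prop :=
  [/\ M 0, (forall x y, M x -> M y -> M (x + y)) &
      (forall c x, T c -> M x -> M (c * x))].

Definition inv_t (t : F) (V : set F) : set F :=
  [set x | exists n : nat, V (t ^+ n * x)].

Variable R : realType.
Variable abs : F -> R.

Definition closed_in (A B : set F) : Prop :=
  forall x, A x -> (forall e : R, 0 < e -> exists y, B y /\ abs (x - y) < e) -> B x.

Definition open_in (A B : set F) : Prop :=
  forall x, B x -> exists2 e : R, 0 < e & forall y, A y -> abs (y - x) < e -> B y.

Definition cauchy_seq (u : nat -> F) : Prop :=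
  forall e : R, 0 < e -> exists N, forall m n, (N <= m)%N -> (N <= n)%N ->
    abs (u m - u n) < e.

Definition converges_to (u : nat -> F) (l : F) : Prop :=
  forall e : R, 0 < e -> exists N, forall n, (N <= n)%N -> abs (u n - l) < e.

Definition banach_space (K E : set F) : Prop :=
  [/\ submodule K E,
      (forall x, E x -> 0 <= abs x /\ (abs x = 0 -> x = 0)),
      (forall x y, E x -> E y -> abs (x + y) <= abs x + abs y),
      (forall c x, K c -> E x -> abs (c * x) = abs c * abs x) &
      (forall u : nat -> F, (forall n, E (u n)) -> cauchy_seq u ->
         exists2 l, E l & converges_to u l)].

End Defs.

From mathcomp Require Import all_boot all_order all_algebra.
From mathcomp Require Import classical_sets reals boolp.
From mathcomp Require Import ring lra zify.
Import Order.TTheory GRing.Theory Num.Theory.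
Local Open Scope ring_scope.
Local Open Scope classical_set_scope.
Set Implicit Arguments. Unset Strict Implicit. Unset Printing Implicit Defensive.

(* Since every element of F0 is t^n u with u a unit of R0, the absolute value
   is the t-adic one: it is multiplicative, ultrametric, takes its nonzero
   values in alpha^Z, and R0 is its closed unit ball.  Condition (II) says
   that V is saturated in R0 (V ∩ t^k R0 = t^k V), so on V the t-adic
   filtration is the filtration by closed balls, and the t-adic completeness
   of V becomes metric completeness.  Hence V is closed in F0 and is the
   closed unit ball of V[1/t]; a Cauchy sequence of V[1/t] eventually lies in
   a single t^-M V, so V[1/t] is complete too. *)

Lemma bernoulli (R : realFieldType) (a : R) (k : nat) :
  1 <= a -> 1 + k%:R * (a - 1) <= a ^+ k.
Proof.
move=> a_ge1; elim: k => [|k IH]; first by rewrite expr0 mul0r addr0.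
rewrite exprS -addn1 natrD.
have k_ge0 : 0 <= k%:R :> R := ler0n _ k.
have : a * (1 + k%:R * (a - 1)) <= a * a ^+ k by rewrite ler_wpM2l //; lra.
have : 0 <= k%:R * ((a - 1) * (a - 1)) by apply: mulr_ge0 => //; nra.
nra.
Qed.

Lemma archi_expNz (R : archiRealFieldType) (a e : R) :
  1 < a -> 0 < e -> exists k : nat, a ^ (- k%:Z) < e.
Proof.
move=> a_gt1 e_gt0; set c := (e * (a - 1))^-1.
have ea_gt0 : 0 < e * (a - 1) by apply: mulr_gt0 => //; lra.
have c_ge0 : 0 <= c by rewrite invr_ge0 ltW.
have c_ea : c * (e * (a - 1)) = 1 by rewrite mulVf // gt_eqF.
exists (Num.bound c); rewrite -exprnN.
have := archi_boundP c_ge0; have := bernoulli (Num.bound c) (ltW a_gt1).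
set k := Num.bound c => bern c_lt_k.
(* a^k >= 1 + k (a - 1) > c (a - 1) = 1 / e *)
have ak_gt0 : 0 < a ^+ k by apply: exprn_gt0; lra.
rewrite -(ltr_pM2r ak_gt0) mulVf ?gt_eqF //.
have : 0 < e * (a - 1) * (k%:R - c) by apply: mulr_gt0 => //; lra.
nra.
Qed.

Section Subring.
Variables (F : fieldType) (S : set F).
Hypothesis S_subring : subring S.

Lemma subring1 : S 1.
Proof. by case: S_subring. Qed.

Lemma subringB x y : S x -> S y -> S (x - y).
Proof. by case: S_subring => _ SB _; apply: SB. Qed.

Lemma subringM x y : S x -> S y -> S (x * y).
Proof. by case: S_subring => _ _ SM; apply: SM. Qed.

Lemma subring0 : S 0.
Proof. by rewrite -(subrr 1); apply: subringB; exact: subring1. Qed.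

Lemma subringN x : S x -> S (- x).
Proof. by rewrite -sub0r; apply: subringB subring0. Qed.

Lemma subringD x y : S x -> S y -> S (x + y).
Proof. by move=> Sx Sy; rewrite -[y]opprK; apply: subringB (subringN Sy). Qed.

Lemma subringX x k : S x -> S (x ^+ k).
Proof.
move=> Sx; elim: k => [|k IH]; first by rewrite expr0; exact: subring1.
by rewrite exprS; apply: subringM.
Qed.

Lemma unit_in1 : unit_in S 1.
Proof. by split; rewrite ?oner_neq0 ?invr1 //; exact: subring1. Qed.

Lemma unit_inN1 : unit_in S (-1).
Proof.
by split; rewrite ?oppr_eq0 ?oner_neq0 ?invrN ?invr1 //; apply: subringN; exact: subring1.
Qed.

Lemma unit_inM u w : unit_in S u -> unit_in S w -> unit_in S (u * w).
Proof.
move=> [Su u0 Sui] [Sw w0 Swi].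
by split; [exact: subringM | exact: mulf_neq0 | rewrite invfM; exact: subringM].
Qed.

Lemma unit_inV u : unit_in S u -> unit_in S u^-1.
Proof. by move=> [Su u0 Sui]; split; rewrite ?invr_eq0 ?invrK. Qed.

End Subring.

Lemma cap_tR0_saturated (F : fieldType) (R0 V : set F) (t : F) : t != 0 ->
  (forall x, (V x /\ exists r, R0 r /\ x = t * r) <-> exists v, V v /\ x = t * v) ->
  forall r, R0 r -> V (t * r) -> V r.
Proof.
move=> t0 V_cap r R0r Vtr.
have [v [Vv /(mulfI t0) ->]] : exists v, V v /\ t * r = t * v.
  by apply/V_cap; split=> //; exists r.
exact: Vv.
Qed.

Section Valuation.
Variables (F : fieldType) (R : realType) (R0 : set F) (t : F) (alpha : R).
Variable abs : F -> R.
Hypotheses (R0_dvr : dvr_unif R0 t) (R0_frac : forall x, frac_of R0 x).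
Hypotheses (alpha_gt1 : 1 < alpha) (abs0 : abs 0 = 0).
Hypothesis abs_unit : forall (n : int) u, unit_in R0 u -> abs (t ^ n * u) = alpha ^ (- n).

Let R0_subring : subring R0. Proof. by case: R0_dvr. Qed.
Let R0_t : R0 t. Proof. by case: R0_dvr. Qed.
Let t_neq0 : t != 0. Proof. by case: R0_dvr. Qed.
Let alpha_gt0 : 0 < alpha. Proof. exact: lt_trans ltr01 alpha_gt1. Qed.

Let expNzS_le (m : nat) : alpha ^ (- m.+1%:Z) <= alpha ^ (- m%:Z).
Proof. by rewrite ler_eXz2l //; lia. Qed.

Lemma frac_dvr_decomp x : x != 0 ->
  exists n : int, exists2 u, unit_in R0 u & x = t ^ n * u.
Proof.
case: R0_dvr => _ _ _ _ R0_decomp x0.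
have [a [b [R0a R0b b0 xE]]] := R0_frac x.
have a0 : a != 0 by apply: contraNneq x0 => a0; rewrite xE a0 mul0r.
have [i [u [Uu aE]]] := R0_decomp a R0a a0.
have [j [w [Uw bE]]] := R0_decomp b R0b b0.
exists (i%:Z - j%:Z), (u / w); first exact: unit_inM (unit_inV Uw).
case: Uw => _ w0 _.
rewrite xE aE bE expfzDr // -exprnN invfM; change (t ^ i%:Z) with (t ^+ i); ring.
Qed.

Lemma abs_expz (n : int) : abs (t ^ n) = alpha ^ (- n).
Proof. by rewrite -[t ^ n]mulr1 abs_unit //; exact: unit_in1. Qed.

Lemma abs1 : abs 1 = 1.
Proof. by have := abs_expz 0; rewrite oppr0 !expr0z. Qed.

Lemma abs_gt0 x : x != 0 -> 0 < abs x.
Proof. by move=> /frac_dvr_decomp [n [u Uu ->]]; rewrite abs_unit // exprz_gt0. Qed.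

Lemma abs_ge0 x : 0 <= abs x.
Proof. by have [->|/abs_gt0/ltW //] := eqVneq x 0; rewrite abs0. Qed.

Lemma absM x y : abs (x * y) = abs x * abs y.
Proof.
have [->|x0] := eqVneq x 0; first by rewrite mul0r abs0 mul0r.
have [->|y0] := eqVneq y 0; first by rewrite mulr0 abs0 mulr0.
have [n [u Uu ->]] := frac_dvr_decomp x0.
have [m [w Uw ->]] := frac_dvr_decomp y0.
have -> : t ^ n * u * (t ^ m * w) = t ^ (n + m) * (u * w) by rewrite expfzDr //; ring.
rewrite abs_unit; last exact: unit_inM.
by rewrite !abs_unit // -expfzDr ?opprD // gt_eqF.
Qed.

Lemma absV x : abs x^-1 = (abs x)^-1.
Proof.
have [->|x0] := eqVneq x 0; first by rewrite invr0 abs0 invr0.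
have ax0 : abs x != 0 by rewrite gt_eqF ?abs_gt0.
by apply: (mulfI ax0); rewrite -absM !mulfV ?abs1.
Qed.

Lemma absN x : abs (- x) = abs x.
Proof.
rewrite -mulN1r absM -[-1]mul1r -(expr0z t) abs_unit; last exact: unit_inN1.
by rewrite oppr0 expr0z mul1r.
Qed.

Lemma R0_abs_le1 x : R0 x <-> abs x <= 1.
Proof.
have [->|x0] := eqVneq x 0; first by rewrite abs0 ler01; split=> // _; exact: subring0.
split=> [R0x|].
  case: R0_dvr => _ _ _ _ /(_ x R0x x0) [k [u [Uu ->]]].
  by rewrite -[t ^+ k]/(t ^ k%:Z) abs_unit // -(expr0z alpha) ler_eXz2l //; lia.
have [n [u Uu ->]] := frac_dvr_decomp x0.
rewrite abs_unit // -(expr0z alpha) ler_eXz2l // => n_ge0.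
have [k ->] : exists k : nat, n = k%:Z by exists `|n|%N; lia.
by case: Uu => R0u _ _; apply: subringM => //; exact: subringX.
Qed.

Lemma abs_ultra x y c : abs x <= c -> abs y <= c -> abs (x + y) <= c.
Proof.
wlog le_yx : x y / abs y <= abs x.
  move=> hw ax ay; have [le_yx|/ltW le_xy] := leP (abs y) (abs x).
    exact: hw.
  by rewrite addrC; exact: hw.
move=> ax _; apply: le_trans ax.
have [x0|x0] := eqVneq x 0; first by rewrite x0 add0r -x0.
have -> : x + y = x * (1 + y / x) by field.
rewrite absM ler_piMr ?abs_ge0 //; apply/R0_abs_le1.
apply: subringD (subring1 _) _ => //; apply/R0_abs_le1.
by rewrite absM absV ler_pdivrMr ?abs_gt0 // mul1r.
Qed.

Lemma abs_ultra_lt x y c : abs x < c -> abs y < c -> abs (x + y) < c.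
Proof.
move=> ax ay; apply: le_lt_trans (_ : _ <= Num.max (abs x) (abs y)) _.
  by apply: abs_ultra; rewrite le_max lexx ?orbT.
by rewrite gt_max ax ay.
Qed.

Lemma abs_lt_expNz x (m : nat) : abs x < alpha ^ (- m%:Z) -> abs x <= alpha ^ (- m.+1%:Z).
Proof.
have [->|x0] := eqVneq x 0; first by rewrite abs0 exprz_ge0 // ltW.
have [n [u Uu ->]] := frac_dvr_decomp x0.
by rewrite abs_unit // ltr_eXz2l // ler_eXz2l //; lia.
Qed.

Lemma tpowM_R0 k z : tpowM t k R0 z <-> abs z <= alpha ^ (- k%:Z).
Proof.
have abs_tk : abs (t ^+ k) = alpha ^ (- k%:Z) by rewrite -abs_expz.
split=> [[y [R0y ->]]|az].
  by rewrite absM abs_tk ler_piMr ?exprz_ge0 ?(ltW alpha_gt0) //; apply/R0_abs_le1.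
exists (z / t ^+ k); split; last by rewrite mulrC divfK ?expf_neq0.
by apply/R0_abs_le1; rewrite absM absV abs_tk ler_pdivrMr ?exprz_gt0 // mul1r.
Qed.

Lemma abs_tXM_le k x : abs (t ^+ k * x) <= abs x.
Proof.
by rewrite absM ler_piMl ?abs_ge0 //; apply/R0_abs_le1; exact: subringX.
Qed.

Lemma abs_small_eq0 x : (forall k : nat, abs x <= alpha ^ (- k%:Z)) -> x = 0.
Proof.
move=> x_small; apply/eqP; apply: contraT => x0.
have [k] := archi_expNz alpha_gt1 (abs_gt0 x0).
by rewrite ltNge x_small.
Qed.

Lemma cauchy_modulus u : cauchy_seq abs u -> exists phi : nat -> nat,
  (forall m, phi m <= phi m.+1)%N /\
  forall m p q, (phi m <= p)%N -> (phi m <= q)%N -> abs (u p - u q) < alpha ^ (- m%:Z).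
Proof.
move=> u_cauchy.
have [g g_mod] := choice (fun m : nat => u_cauchy _ (exprz_gt0 (- m%:Z) alpha_gt0)).
exists (fun m => \sum_(j < m.+1) g j)%N; split=> [m|m p q le_p le_q].
  by rewrite [X in (_ <= X)%N]big_ord_recr leq_addr.
have le_g : (g m <= \sum_(j < m.+1) g j)%N by rewrite big_ord_recr leq_addl.
by apply: g_mod; exact: leq_trans le_g _.
Qed.

Lemma converges_to_shift_scale u c N0 l : c != 0 ->
  converges_to abs (fun n => c * u (n + N0)%N) l -> converges_to abs u (l / c).
Proof.
move=> c0 cu_lim e e_gt0.
have [N cu_near] := cu_lim (e * abs c) (mulr_gt0 e_gt0 (abs_gt0 c0)).
exists (N + N0)%N => n le_n.
have := cu_near (n - N0)%N; rewrite subnK; last by lia.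
have -> : u n - l / c = (c * u n - l) / c by field.
by rewrite absM absV ltr_pdivrMr ?abs_gt0 //; apply; lia.
Qed.

Section Lattice.
Variables (T V : set F).
Hypotheses (T_subring : subring T) (T_t : T t) (V_submodule : submodule T V).
Hypotheses (V_sub_R0 : V `<=` R0) (V_saturated : forall r, R0 r -> V (t * r) -> V r).

Lemma submoduleD x y : V x -> V y -> V (x + y).
Proof. by case: V_submodule => _ VD _; apply: VD. Qed.

Lemma submoduleM c x : T c -> V x -> V (c * x).
Proof. by case: V_submodule => _ _ VM; apply: VM. Qed.

Lemma submoduleB x y : V x -> V y -> V (x - y).
Proof.
move=> Vx Vy; rewrite -mulN1r; apply: (submoduleD Vx).
exact: submoduleM (subringN T_subring (subring1 T_subring)) Vy.
Qed.

Lemma inv_t_of x : V x -> inv_t t V x.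
Proof. by exists 0%N; rewrite expr0 mul1r. Qed.

Lemma inv_tM c x : T c -> inv_t t V x -> inv_t t V (c * x).
Proof. by move=> Tc [n Vn]; exists n; rewrite mulrCA; exact: submoduleM. Qed.

Lemma inv_tXM k x : inv_t t V x -> inv_t t V (t ^+ k * x).
Proof. by apply: inv_tM; exact: subringX. Qed.

Lemma inv_tD x y : inv_t t V x -> inv_t t V y -> inv_t t V (x + y).
Proof.
move=> [n Vn] [m Vm]; exists (n + m)%N.
have -> : t ^+ (n + m) * (x + y) = t ^+ m * (t ^+ n * x) + t ^+ n * (t ^+ m * y).
  by rewrite exprD; ring.
by apply: submoduleD; apply: submoduleM => //; exact: subringX.
Qed.

Lemma inv_tB x y : inv_t t V x -> inv_t t V y -> inv_t t V (x - y).
Proof.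
move=> Ex Ey; rewrite -mulN1r; apply: (inv_tD Ex).
exact: inv_tM (subringN T_subring (subring1 T_subring)) Ey.
Qed.

Lemma inv_t_divX k x : inv_t t V x -> inv_t t V (x / t ^+ k).
Proof.
move=> [n Vn]; exists (n + k)%N.
by rewrite exprD -mulrA [t ^+ k * _]mulrCA mulfV ?mulr1 // expf_neq0.
Qed.

Lemma lattice_saturatedX k w : R0 w -> V (t ^+ k * w) -> V w.
Proof.
move=> R0w; elim: k => [|k IH]; first by rewrite expr0 mul1r.
rewrite exprS -mulrA => Vtw; apply/IH/V_saturated => //.
by apply: subringM => //; exact: subringX.
Qed.

Lemma lattice_ball x : V x <-> inv_t t V x /\ abs x <= 1.
Proof.
split=> [Vx|[[n Vn] ax]]; first by split; [exact: inv_t_of | exact/R0_abs_le1/V_sub_R0].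
by apply: lattice_saturatedX Vn; apply/R0_abs_le1.
Qed.

Lemma lattice_near x y : V x -> inv_t t V y -> abs (y - x) <= 1 -> V y.
Proof.
move=> Vx Ey ayx.
have Vyx : V (y - x) by apply/lattice_ball; split=> //; exact/inv_tB/inv_t_of.
by rewrite -(subrK x y); apply: submoduleD.
Qed.

Lemma tpowM_lattice k z : V z -> tpowM t k V z <-> abs z <= alpha ^ (- k%:Z).
Proof.
move=> Vz; split=> [[y [Vy ->]]|/tpowM_R0 [y [R0y zE]]].
  by apply/tpowM_R0; exists y; split=> //; exact: V_sub_R0.
by exists y; split=> //; apply: (lattice_saturatedX (k := k) R0y); rewrite -zE.
Qed.

(* Writing t^N v = t^k u with u a unit of R0, saturation puts u = t^(N-k) v in
   V, so the infimum is attained at n = N - k. *)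
Lemma lattice_abs_inf v : inv_t t V v -> v != 0 ->
  abs v = inf [set alpha ^ n | n in [set n : int | V (t ^ n * v)]].
Proof.
move=> [N VN] v0.
have [k [u [Uu NkE]]] : exists k : nat, exists u, unit_in R0 u /\ t ^+ N * v = t ^+ k * u.
  by case: R0_dvr => _ _ _ _; apply; [exact: V_sub_R0 | rewrite mulf_neq0 // expf_neq0].
have Vu : V u by apply: (@lattice_saturatedX k); [case: Uu | rewrite -NkE].
set m : int := N%:Z - k%:Z.
have uE : u = t ^ m * v.
  apply: (mulfI (expf_neq0 k t_neq0)).
  rewrite -NkE /m expfzDr // -exprnN; change (t ^ N%:Z) with (t ^+ N).
  by field; rewrite expf_neq0.
have lb n : V (t ^ n * v) -> abs v <= alpha ^ n.
  move=> /V_sub_R0/R0_abs_le1; rewrite absM abs_expz -invr_expz mulrC.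
  by rewrite ler_pdivrMr ?exprz_gt0 // mul1r.
have av : abs v = alpha ^ m.
  have : abs u = 1 by rewrite -[u]mul1r -(expr0z t) abs_unit // oppr0 expr0z.
  by rewrite uE absM abs_expz -invr_expz mulrC => /divr1_eq.
apply/le_anti/andP; split.
  apply: lb_le_inf; first by exists (alpha ^ m), m; rewrite //= -uE.
  by move=> _ [n Vn <-]; exact: lb.
rewrite av; apply: ge_inf; first by exists (abs v) => _ [n Vn <-]; exact: lb.
by exists m; rewrite //= -uE.
Qed.

Lemma lattice_open : open_in abs (inv_t t V) V.
Proof. by move=> x Vx; exists 1 => // y Ey /ltW; exact: lattice_near. Qed.

Hypothesis V_complete : tadic_complete t V.

Lemma lattice_fast_lim f : (forall m, V (f m)) ->
  (forall m, abs (f m.+1 - f m) <= alpha ^ (- m.+1%:Z)) ->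
  exists2 l, V l & forall m, abs (l - f m) <= alpha ^ (- m.+1%:Z).
Proof.
move=> Vf f_fast; case: V_complete => _ /(_ f Vf) [].
  by move=> m; apply/(tpowM_lattice _ (submoduleB (Vf _) (Vf _))).
move=> l [Vl l_lim]; exists l => // m.
exact/(tpowM_lattice _ (submoduleB Vl (Vf m))).
Qed.

Lemma lattice_closed : closed_in abs setT V.
Proof.
move=> x _ x_adh.
have [f f_near] := choice (fun m : nat => x_adh _ (exprz_gt0 (- m%:Z) alpha_gt0)).
have near_x m : abs (x - f m) <= alpha ^ (- m.+1%:Z) := abs_lt_expNz (f_near m).2.
have [l Vl l_lim] : exists2 l, V l & forall m, abs (l - f m) <= alpha ^ (- m.+1%:Z).
  apply: lattice_fast_lim => [m|m]; first exact: (f_near m).1.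
  have -> : f m.+1 - f m = (x - f m) + - (x - f m.+1) by ring.
  by apply: abs_ultra; rewrite ?absN ?near_x // (le_trans (near_x m.+1)).
suff /subr0_eq -> : x - l = 0 by [].
apply: abs_small_eq0 => m; apply: le_trans (expNzS_le m).
have -> : x - l = (x - f m) + - (l - f m) by ring.
by apply: abs_ultra; rewrite ?absN.
Qed.

Lemma lattice_cauchy_lim u : (forall n, V (u n)) -> cauchy_seq abs u ->
  exists2 l, V l & converges_to abs u l.
Proof.
move=> Vu /cauchy_modulus [phi [phi_mono phi_mod]].
have [l Vl l_lim] := @lattice_fast_lim (u \o phi) (fun m => Vu _)
  (fun m => abs_lt_expNz (phi_mod _ _ _ (phi_mono m) (leqnn _))).
exists l => // e e_gt0.
have [k ek] := archi_expNz alpha_gt1 e_gt0.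
exists (phi k) => n le_n.
have -> : u n - l = (u n - u (phi k)) + - (l - u (phi k)) by ring.
apply: abs_ultra_lt; first exact: lt_trans (phi_mod _ _ _ le_n (leqnn _)) ek.
by rewrite absN (le_lt_trans (l_lim k)) // (le_lt_trans (expNzS_le k)).
Qed.

Lemma inv_t_closed : closed_in abs setT (inv_t t V).
Proof.
(* With y in t^-N V at distance < 1 from x, t^N x is a limit of points of V. *)
move=> x _ x_adh.
have [y [[N VN] axy]] := x_adh 1 ltr01.
exists N; apply: lattice_closed => // e e_gt0.
have min_gt0 : 0 < Num.min e 1 by rewrite lt_min e_gt0 ltr01.
have [z [Ez axz]] := x_adh _ min_gt0.
exists (t ^+ N * z); split.
  apply: lattice_near VN (inv_tXM N Ez) _.
  rewrite -mulrBr (le_trans (abs_tXM_le _ _)) //.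
  have -> : z - y = (x - y) + - (x - z) by ring.
  apply: abs_ultra; rewrite ?absN ltW //.
  by apply: lt_le_trans axz _; rewrite ge_min lexx orbT.
rewrite -mulrBr (le_lt_trans (abs_tXM_le _ _)) //.
by apply: lt_le_trans axz _; rewrite ge_min lexx.
Qed.

Lemma inv_t_cauchy_lim u : (forall n, inv_t t V (u n)) -> cauchy_seq abs u ->
  exists2 l, inv_t t V l & converges_to abs u l.
Proof.
move=> Eu u_cauchy.
have [N0 near_N0] := u_cauchy 1 ltr01.
have [M VM] := Eu N0.
(* Beyond N0 the sequence stays within 1 of u N0, hence inside t^-M V. *)
pose w n := t ^+ M * u (n + N0)%N.
have Vw n : V (w n).
  apply: lattice_near VM (inv_tXM M (Eu _)) _.
  by rewrite -mulrBr (le_trans (abs_tXM_le _ _)) // ltW // near_N0 ?leq_addl.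
have w_cauchy : cauchy_seq abs w.
  move=> e /u_cauchy [N u_near]; exists N => p q le_p le_q.
  by rewrite -mulrBr (le_lt_trans (abs_tXM_le _ _)) // u_near //; lia.
have [l Vl w_lim] := lattice_cauchy_lim Vw w_cauchy.
exists (l / t ^+ M); first exact/inv_t_divX/inv_t_of.
exact: converges_to_shift_scale (expf_neq0 _ t_neq0) w_lim.
Qed.

Lemma inv_t_banach : dvr_unif T t -> banach_space abs (frac_of T) (inv_t t V).
Proof.
case=> _ _ _ _ T_decomp; split.
- split; first by apply: inv_t_of; case: V_submodule.
    exact: inv_tD.
  move=> _ x [a [b [Ta Tb b0 ->]]] Ex.
  have [j [w [[Tw w0 Twi] ->]]] := T_decomp b Tb b0.
  have -> : a / (t ^+ j * w) * x = a * w^-1 * (x / t ^+ j).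
    by field; rewrite w0 expf_neq0.
  by apply: inv_tM; [exact: subringM | exact: inv_t_divX].
- move=> x _; split=> [|ax]; first exact: abs_ge0.
  by apply/eqP; apply: contraT => /abs_gt0; rewrite ax ltxx.
- by move=> x y _ _; apply: abs_ultra; rewrite ?lerDl ?lerDr abs_ge0.
- by move=> c x _ _; exact: absM.
- by move=> u Eu; exact: inv_t_cauchy_lim.
Qed.

End Lattice.
End Valuation.

Theorem lemma3p1 (F0 : fieldType) (R : realType)
  (T R0 F1 F2 V W : set F0) (t : F0) (alpha : R) (abs : F0 -> R) :
  cdvr_unif T t ->
  cdvr_unif R0 t ->
  T `<=` R0 ->
  (forall x, frac_of R0 x) ->
  1 < alpha ->
  abs 0 = 0 ->
  (forall (n : int) (u : F0), unit_in R0 u -> abs (t ^ n * u) = alpha ^ (- n)) ->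
  subfield F1 -> subfield F2 -> T `<=` F1 -> T `<=` F2 ->
  V `<=` F1 `&` R0 -> W `<=` F2 `&` R0 ->
  submodule T V -> submodule T W ->
  tadic_complete t V -> tadic_complete t W ->
  (forall r, R0 r -> exists v w, [/\ V v, W w & r = v + w]) ->
  (forall x, (V x /\ exists r, R0 r /\ x = t * r) <-> exists v, V v /\ x = t * v) ->
  (forall x, (W x /\ exists r, R0 r /\ x = t * r) <-> exists w, W w /\ x = t * w) ->
  [/\ closed_in abs R0 V,
      (forall v, inv_t t V v -> v != 0 ->
         abs v = inf [set alpha ^ n | n in [set n : int | V (t ^ n * v)]]),
      (forall x, V x <-> (inv_t t V x /\ abs x <= 1)),
      open_in abs (inv_t t V) V /\ closed_in abs (inv_t t V) V &
      closed_in abs setT (inv_t t V) /\ banach_space abs (frac_of T) (inv_t t V)].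
Proof.
move=> [T_dvr _] [R0_dvr _] _ R0_frac alpha_gt1 abs0 abs_unit _ _ _ _ V_sub _
  V_submodule _ V_complete _ _ V_cap _.
have [T_subring T_t _ _ _] := T_dvr.
have [_ _ t_neq0 _ _] := R0_dvr.
have V_sub_R0 : V `<=` R0 by move=> x /V_sub [].
have V_saturated := cap_tR0_saturated t_neq0 V_cap.
have V_closed := lattice_closed R0_dvr R0_frac alpha_gt1 abs0 abs_unit
  T_subring V_submodule V_sub_R0 V_saturated V_complete.
split.
- by move=> x _; exact: V_closed.
- move=> v.
  exact: (lattice_abs_inf R0_dvr R0_frac alpha_gt1 abs0 abs_unit V_sub_R0 V_saturated).
- exact: (lattice_ball R0_dvr R0_frac alpha_gt1 abs0 abs_unit V_sub_R0 V_saturated).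
- split; last by move=> x _; exact: V_closed.
  exact: (lattice_open R0_dvr R0_frac alpha_gt1 abs0 abs_unit
    T_subring T_t V_submodule V_sub_R0 V_saturated).
- split.
    exact: (inv_t_closed R0_dvr R0_frac alpha_gt1 abs0 abs_unit
      T_subring T_t V_submodule V_sub_R0 V_saturated V_complete).
  exact: (inv_t_banach R0_dvr R0_frac alpha_gt1 abs0 abs_unit
    T_subring T_t V_submodule V_sub_R0 V_saturated V_complete T_dvr).
Qed.
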